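(* Let $\{Y_{1\,t}\}_{t\in\mathbb N}$ and $\{Y_{2\,t}\}_{t\in\mathbb N}$ be two real-valued time series with $E(Y_{2\,t}^2)<\infty$ for all $t$, and let $\mathcal F^{(1)}_{t-1}=\sigma(Y_{1\,t-1},Y_{1\,t-2},\ldots)$, $\mathcal F^{(2)}_{t-1}=\sigma(Y_{2\,t-1},Y_{2\,t-2},\ldots)$, $\mathcal F^{(1,2)}_{t-1}=\sigma(\mathcal F^{(1)}_{t-1},\mathcal F^{(2)}_{t-1})$. Consider the three conditions (M) $\Pr\big(E(Y_{2\,t}\mid\mathcal F^{(2)}_{t-1})\neq E(Y_{2\,t}\mid\mathcal F^{(1,2)}_{t-1})\big)>0$ (causality in mean); (V) $\Pr\Big(E\big[(Y_{2\,t}-E(Y_{2\,t}\mid\mathcal F^{(1,2)}_{t-1}))^2\mid\mathcal F^{(2)}_{t-1}\big]\neq E\big[(Y_{2\,t}-E(Y_{2\,t}\mid\mathcal F^{(1,2)}_{t-1}))^2\mid\mathcal F^{(1,2)}_{t-1}\big]\Big)>0$ (causality in variance); (S) $\Pr\Big(E\big[(Y_{2\,t}-E(Y_{2\,t}\mid\mathcal F^{(2)}_{t-1}))^2\mid\mathcal F^{(2)}_{t-1}\big]\neq E\big[(Y_{2\,t}-E(Y_{2\,t}\mid\mathcal F^{(1,2)}_{t-1}))^2\mid\mathcal F^{(1,2)}_{t-1}\big]\Big)>0$. Then (S) holds if at least one of (M) and (V) holds.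
   Context: Condition (V) is the paper's explicit formulation of Granger causality in variance, $\Pr(\mathrm{Var}(Y_{2\,t}\mid\mathcal F^{(2)}_{t-1})\neq \mathrm{Var}(Y_{2\,t}\mid\mathcal F^{(1,2)}_{t-1}))>0$, written with the centering $E(Y_{2\,t}\mid\mathcal F^{(1,2)}_{t-1})$. Condition (S) expresses simultaneous Granger causality in mean and variance from $\{Y_{1\,t}\}$ to $\{Y_{2\,t}\}$. *)

From HB Require Import structures.
From mathcomp Require Import all_boot all_order all_algebra.
From mathcomp Require Import all_classical all_reals all_analysis.
Set Implicit Arguments. Unset Strict Implicit. Unset Printing Implicit Defensive.
Import Order.TTheory GRing.Theory Num.Theory.
Local Open Scope classical_set_scope.
Local Open Scope ring_scope.

(* Generators of the past sigma-algebra sigma(Y_{t-1}, Y_{t-2}, ...):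
   preimages of Borel sets under Y_s, s < t. *)
Definition past_gen {d} {T : measurableType d} {R : realType}
  (Y : nat -> T -> R) (t : nat) : set (set T) :=
  [set A | exists s : nat, (s < t)%N /\
     exists B : set R, measurable B /\ A = Y s @^-1` B].

Definition past_sigma {d} {T : measurableType d} {R : realType}
  (Y : nat -> T -> R) (t : nat) : set (set T) := <<s past_gen Y t >>.

Definition past_sigma2 {d} {T : measurableType d} {R : realType}
  (Y1 Y2 : nat -> T -> R) (t : nat) : set (set T) :=
  <<s past_sigma Y1 t `|` past_sigma Y2 t >>.

(* Z is a version of the conditional expectation E(X | G):
   Z is G-measurable, integrable, and has the same integral as X on
   every set of G. *)
Definition is_cond_exp {d} {T : measurableType d} {R : realType}
  (P : probability T R) (G : set (set T)) (X Z : T -> R) : Prop :=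
  (forall B : set R, measurable B -> G (Z @^-1` B)) /\
  P.-integrable setT (fun x => (Z x)%:E) /\
  (forall A, G A ->
     (\int[P]_(x in A) (Z x)%:E = \int[P]_(x in A) (X x)%:E)%E).

From HB Require Import structures.
From mathcomp Require Import all_boot all_order all_algebra.
From mathcomp Require Import all_classical all_reals all_analysis.
From mathcomp Require Import measurable_realfun ring lra.
Import Order.TTheory GRing.Theory Num.Theory.
Import HBNNSimple.
Local Open Scope classical_set_scope.
Local Open Scope ring_scope.

(* Let F = F^(2)_(t-1) and F' = F^(1,2)_(t-1), so that F is contained in F',
   let m, m' be the conditional means of Y = Y_(2 t) given F and F', and put
   e = Y - m' and D = m' - m.  The residual e is orthogonal to every
   F'-measurable function, and D is square integrable because
   D = (Y - m) - e, hence E[(Y - m)^2] = E[e^2] + E[D^2].  If (S) fails, the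
   conditional second moments s = E[(Y - m)^2 | F] and v' = E[e^2 | F'] agree
   a.s.  Taking expectations gives E[D^2] = 0, so (M) fails.  Moreover
   v = E[e^2 | F] and s have the same integral as v' over every set of F, so
   v = s = v' a.s. and (V) fails too. *)

Section real_inequalities.
Context {R : realDomainType}.
Implicit Types x y : R.

Lemma normr_max0_le y : `|Num.max y 0| <= `|y|.
Proof. by rewrite /Num.max; case: ltP; rewrite ?normr0. Qed.

Lemma normr_le1Dsqr x : `|x| <= 1 + x ^+ 2.
Proof.
rewrite -[x ^+ 2]real_normK ?num_real //.
by have := normr_ge0 x; move: `|x| => a; nra.
Qed.

Lemma normrM_le_sqrD x y : `|x * y| <= x ^+ 2 + y ^+ 2.
Proof.
rewrite normrM -[x ^+ 2]real_normK ?num_real // -[y ^+ 2]real_normK ?num_real //.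
by have := normr_ge0 x; have := normr_ge0 y; move: `|x| `|y| => a b; nra.
Qed.

Lemma sqrB_le x y : (x - y) ^+ 2 <= (x ^+ 2 + y ^+ 2) + (x ^+ 2 + y ^+ 2).
Proof. by have := sqr_ge0 (x + y); nra. Qed.

End real_inequalities.

Section integrable_real.
Context {d} {T : measurableType d} {R : realType}.
Variable mu : {measure set T -> \bar R}.
Implicit Types f g : T -> R.

Lemma integrable_le_normr {f g} :
  measurable_fun setT f -> (forall x, `|f x| <= `|g x|) ->
  mu.-integrable setT (EFin \o g) -> mu.-integrable setT (EFin \o f).
Proof.
move=> mf fg; apply: le_integrable => //; first exact/measurable_EFinP.
by move=> x _; rewrite lee_fin.
Qed.

Lemma ge0_integrable_integral_eq {f g} :
  measurable_fun setT f -> (forall x, 0 <= f x) ->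
  mu.-integrable setT (EFin \o g) ->
  (\int[mu]_x (f x)%:E = \int[mu]_x (g x)%:E)%E ->
  mu.-integrable setT (EFin \o f).
Proof.
move=> mf f0 ig fg; apply/integrableP; split; first exact/measurable_EFinP.
under eq_integral do rewrite /= ger0_norm //.
by rewrite fg; exact: integrable_lty.
Qed.

Lemma integrableD_EFin {f g} :
  mu.-integrable setT (EFin \o f) -> mu.-integrable setT (EFin \o g) ->
  mu.-integrable setT (EFin \o (f \+ g)).
Proof.
move=> fi gi; apply: (eq_integrable measurableT _ _ _ (integrableD measurableT fi gi)).
by move=> x _; rewrite /= EFinD.
Qed.

Lemma integrableB_EFin {f g} :
  mu.-integrable setT (EFin \o f) -> mu.-integrable setT (EFin \o g) ->
  mu.-integrable setT (EFin \o (f \- g)).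
Proof.
move=> fi gi; apply: (eq_integrable measurableT _ _ _ (integrableB measurableT fi gi)).
by move=> x _; rewrite /= EFinB.
Qed.

Lemma ge0_Rintegral_eq0 {f} : (forall x, 0 <= f x) ->
  mu.-integrable setT (EFin \o f) -> \int[mu]_x f x = 0 -> f = cst 0 %[ae mu].
Proof.
move=> f0 fi f00; have mf := measurable_int mu fi.
have /(ae_eq_integral_abs mu measurableT mf) : (\int[mu]_x `|(f x)%:E| = 0)%E.
  under eq_integral do rewrite abse_EFin ger0_norm //.
  by rewrite -[LHS]fineK ?integrable_fin_num // -/(Rintegral _ _ _) f00.
by apply: filterS => x fx0 /fx0 [].
Qed.

Lemma measurable_neq f g : measurable_fun setT f -> measurable_fun setT g ->
  measurable [set x | f x <> g x].
Proof.
move=> mf mg.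
rewrite (_ : [set x | _] = [set: T] `&` [set x | (f x)%:E != (g x)%:E]).
  by apply: measurable_neqe => //; exact/measurable_EFinP.
apply/seteqP; split => x /=; first by move=> fg; split => //; apply/eqP => -[].
by case=> _ /eqP fg ?; apply: fg; congr EFin.
Qed.

Lemma ae_eq_measure_neq0 {f g} : measurable_fun setT f -> measurable_fun setT g ->
  f = g %[ae mu] <-> mu [set x | f x <> g x] = 0.
Proof.
move=> mf mg; have mfg : measurable [set x | f x <> g x] by exact: measurable_neq.
split.
  case=> N [mN N0 sN]; apply/eqP; rewrite eq_le measure_ge0 andbT -N0.
  by apply: le_measure; rewrite ?inE // => x fg; apply: sN => /(_ I).
by move=> fg0; exists [set x | f x <> g x]; split => // x /= fg; apply: contra_not fg.
Qed.

Lemma ae_eq_integral_EFin {A : set T} {f g} : measurable A ->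
  measurable_fun setT f -> measurable_fun setT g -> f = g %[ae mu] ->
  (\int[mu]_(x in A) (f x)%:E = \int[mu]_(x in A) (g x)%:E)%E.
Proof.
move=> mA mf mg fg; apply: ae_eq_integral => //.
- exact/measurable_EFinP/(measurable_funS measurableT).
- exact/measurable_EFinP/(measurable_funS measurableT).
by apply: filterS fg => x fgx /(fun _ => I) /fgx ->.
Qed.

End integrable_real.

Lemma integrable_sqr_integrable {d} {T : measurableType d} {R : realType}
    (mu : {finite_measure set T -> \bar R}) {f : T -> R} :
  measurable_fun setT f -> mu.-integrable setT (EFin \o (fun x => f x ^+ 2)) ->
  mu.-integrable setT (EFin \o f).
Proof.
move=> mf if2; apply: (integrable_le_normr mu mf _
  (integrableD_EFin mu (finite_measure_integrable_cst mu 1 measurableT) if2)).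
by move=> x /=; rewrite [X in _ <= X]ger0_norm ?normr_le1Dsqr // addr_ge0 ?sqr_ge0.
Qed.

(* A function is <<s G >>-measurable when it is measurable on the type
   [g_sigma_algebraType G], which carries the sigma-algebra generated by G. *)
Section sub_sigma_algebra.
Context {d} {T : measurableType d} {R : realType}.
Variable mu : {measure set T -> \bar R}.
Context {G : set (set T)}.
Hypothesis GM : G `<=` measurable.

Local Notation TG := (g_sigma_algebraType G).

Lemma g_sigma_sub_measurable : <<s G >> `<=` measurable.
Proof. exact: smallest_sub (@sigma_algebra_measurable _ T) GM. Qed.

Lemma measurable_fun_g_sigma {d'} {U : measurableType d'} {f : T -> U} :
  measurable_fun [set: TG] (f : TG -> U) -> measurable_fun [set: T] f.
Proof. by move=> mf _ B mB; apply: g_sigma_sub_measurable; exact: mf. Qed.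

Lemma preimage_measurable_fun_g_sigma {d'} {U : measurableType d'} {f : T -> U} :
  (forall B, measurable B -> <<s G >> (f @^-1` B)) ->
  measurable_fun [set: TG] (f : TG -> U).
Proof. by move=> fG _ B mB; rewrite setTI; exact: fG. Qed.

Local Open Scope ereal_scope.

Lemma ge0_integral_nnsfun_mul (s : {nnsfun TG >-> R}) (c : T -> R) :
  measurable_fun setT c -> (forall x, (0 <= c x)%R) ->
  \int[mu]_x ((s x)%:E * (c x)%:E) =
  \sum_(y \in range s) y%:E * \int[mu]_(x in (s : T -> R) @^-1` [set y]) (c x)%:E.
Proof.
move=> mc c0.
have mA y : measurable ((s : T -> R) @^-1` [set y]).
  exact: g_sigma_sub_measurable (measurable_funPTI s (measurable_set1 y)).
have ind0 y x : (0 <= y * \1_((s : T -> R) @^-1` [set y]) x)%R.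
  by rewrite indicE; case: (boolP (x \in _)) => [/set_mem <-|_];
    rewrite ?mulr1 ?mulr0.
transitivity (\int[mu]_x \sum_(y \in range s)
    ((y * \1_((s : T -> R) @^-1` [set y]) x)%:E * (c x)%:E)).
  apply: eq_integral => x _; rewrite [in LHS]fimfunE -fsumEFin //.
  by rewrite ge0_mule_fsuml // => y; rewrite lee_fin.
rewrite ge0_integral_fsum //; last 2 first.
- move=> y; apply: emeasurable_funM; apply/measurable_EFinP => //.
  by apply: measurable_funM => //; exact: measurable_indic.
- by move=> y x _; rewrite mule_ge0 ?lee_fin.
apply: eq_fsbigr => y /set_mem [x0 _ <-]; under eq_integral do rewrite EFinM -muleA.
rewrite ge0_integralZl_EFin //; last 2 first.
- by move=> x _; rewrite mule_ge0 ?lee_fin.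
- by apply: emeasurable_funM; apply/measurable_EFinP => //; exact: measurable_indic.
congr (_ * _); rewrite [RHS]integral_mkcond epatch_indic.
by apply: eq_integral => x _; rewrite muleC.
Qed.

(* Approximate h from below by <<s G >>-simple functions, on whose level sets
   a and b have equal integrals, and pass to the limit by monotone
   convergence. *)
Lemma ge0_integral_mul_g_sigma_eq {a b h : T -> R} :
  measurable_fun setT a -> measurable_fun setT b ->
  (forall x, (0 <= a x)%R) -> (forall x, (0 <= b x)%R) ->
  (forall A, <<s G >> A ->
     \int[mu]_(x in A) (a x)%:E = \int[mu]_(x in A) (b x)%:E) ->
  measurable_fun [set: TG] (h : TG -> R) -> (forall x, (0 <= h x)%R) ->
  \int[mu]_x (h x * a x)%:E = \int[mu]_x (h x * b x)%:E.
Proof.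
move=> ma mb a0 b0 ab mh h0.
have mhE : measurable_fun [set: TG] (EFin \o h : TG -> \bar R) by exact/measurable_EFinP.
pose hn := nnsfun_approx measurableT mhE.
suff hnE (c : T -> R) : measurable_fun setT c -> (forall x, (0 <= c x)%R) ->
    \int[mu]_x (h x * c x)%:E = limn (fun n => \int[mu]_x ((hn n x)%:E * (c x)%:E)).
  rewrite (hnE a) // (hnE b) //; congr (limn _); apply/funext => n.
  rewrite !ge0_integral_nnsfun_mul //; apply: eq_fsbigr => y _; congr (_ * _).
  by apply: ab; exact: (measurable_funPTI (hn n) (measurable_set1 y)).
move=> mc c0.
have hnx x : (h x * c x)%:E = limn (fun n => (hn n x)%:E * (c x)%:E).
  rewrite EFinM; apply/esym/cvg_lim => //; apply: cvgeZr => //.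
  by apply: cvg_nnsfun_approx => // y _; rewrite lee_fin.
under eq_integral do rewrite hnx.
apply: monotone_convergence => //.
- move=> n; apply/emeasurable_funM/measurable_EFinP => //.
  exact/measurable_EFinP/measurable_fun_g_sigma/measurable_funP.
- by move=> n x _; rewrite mule_ge0 ?lee_fin.
- move=> x _ m n mn; rewrite lee_wpmul2r ?lee_fin //.
  by have /lefP := nd_nnsfun_approx measurableT mhE mn; apply.
Qed.

(* The restriction of mu to <<s G >> is its pushforward along the identity,
   to which the library's uniqueness lemma integral_ae_eq applies. *)
Lemma ae_eq_g_sigma_integral {Z1 Z2 : T -> R} :
  measurable_fun [set: TG] (Z1 : TG -> R) ->
  measurable_fun [set: TG] (Z2 : TG -> R) ->
  mu.-integrable setT (EFin \o Z1) -> mu.-integrable setT (EFin \o Z2) ->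
  (forall A, <<s G >> A ->
     \int[mu]_(x in A) (Z1 x)%:E = \int[mu]_(x in A) (Z2 x)%:E) ->
  Z1 = Z2 %[ae mu].
Proof.
move=> m1 m2 i1 i2 e12.
have mid : measurable_fun [set: T] (id : T -> TG).
  by move=> _ A /g_sigma_sub_measurable; rewrite setTI.
have mE1 : measurable_fun [set: TG] (EFin \o Z1 : TG -> \bar R) by exact/measurable_EFinP.
have mE2 : measurable_fun [set: TG] (EFin \o Z2 : TG -> \bar R) by exact/measurable_EFinP.
have /(_ mid) [|||N [mN N0 sN]] := @integral_ae_eq _ TG R
  (pushforward mu (id : T -> TG)) setT measurableT (EFin \o Z2) (EFin \o Z1).
- exact: (integrable_pushforward mid mE1 i1 measurableT).
- exact: mE2.
- move=> A _ mA; have mAT : measurable (A : set T) by exact: g_sigma_sub_measurable.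
  rewrite (integral_pushforward mid mE1 _ mA); last exact: integrableS i1.
  rewrite (integral_pushforward mid mE2 _ mA); last exact: integrableS i2.
  exact/e12.
exists N; split => //; first exact: g_sigma_sub_measurable.
by move=> x /= nx; apply: sN => /= /(_ I) [].
Qed.

Local Close Scope ereal_scope.

Lemma g_sigma_integral_funrpos_eq {e : T -> R} :
  mu.-integrable setT (EFin \o e) ->
  (forall A, <<s G >> A -> \int[mu]_(x in A) e x = 0) ->
  forall A, <<s G >> A ->
  (\int[mu]_(x in A) (e^\+ x)%:E = \int[mu]_(x in A) (e^\- x)%:E)%E.
Proof.
move=> ie e0 A GA; have mA : measurable A by exact: g_sigma_sub_measurable.
have ieA : mu.-integrable A (EFin \o e) by exact: integrableS ie.
have ipA := integrable_funrpos mA ieA; have inA := integrable_funrneg mA ieA.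
rewrite -[LHS]fineK ?integrable_fin_num // -[RHS]fineK ?integrable_fin_num //.
congr EFin; apply/eqP; rewrite -subr_eq0 -RintegralB // -(e0 A GA).
by apply/eqP/eq_Rintegral => x _; rewrite -[in RHS](funrposBneg e).
Qed.

Lemma ge0_Rintegral_mul_g_sigma_eq0 {e k : T -> R} :
  mu.-integrable setT (EFin \o e) ->
  (forall A, <<s G >> A -> \int[mu]_(x in A) e x = 0) ->
  measurable_fun [set: TG] (k : TG -> R) -> (forall x, 0 <= k x) ->
  mu.-integrable setT (EFin \o (k \* e)) ->
  \int[mu]_x (k x * e x) = 0.
Proof.
move=> ie e0 mk k0 ike.
have me : measurable_fun setT e by exact/measurable_EFinP/(measurable_int mu ie).
have mkT := measurable_fun_g_sigma mk.
have ikp : mu.-integrable setT (EFin \o (k \* e^\+)).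
  apply: integrable_le_normr ike; first exact/measurable_funM/measurable_funrpos.
  by move=> x; rewrite !normrM ler_wpM2l //; exact: normr_max0_le.
have ikn : mu.-integrable setT (EFin \o (k \* e^\-)).
  apply: integrable_le_normr ike; first exact/measurable_funM/measurable_funrneg.
  by move=> x; rewrite !normrM ler_wpM2l // -[`|e x|]normrN; exact: normr_max0_le.
have kpn := ge0_integral_mul_g_sigma_eq (measurable_funrpos me) (measurable_funrneg me)
  (funrpos_ge0 e) (funrneg_ge0 e) (g_sigma_integral_funrpos_eq ie e0) mk k0.
transitivity (\int[mu]_x (k x * e^\+ x - k x * e^\- x)).
  by apply: eq_Rintegral => x _; rewrite -mulrBr -[in LHS](funrposBneg e).
by rewrite RintegralB // /Rintegral kpn subrr.
Qed.

Lemma Rintegral_mul_g_sigma_eq0 {e h : T -> R} :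
  mu.-integrable setT (EFin \o e) ->
  (forall A, <<s G >> A -> \int[mu]_(x in A) e x = 0) ->
  measurable_fun [set: TG] (h : TG -> R) ->
  mu.-integrable setT (EFin \o (h \* e)) ->
  \int[mu]_x (h x * e x) = 0.
Proof.
move=> ie e0 mh ihe.
have me : measurable_fun setT e by exact/measurable_EFinP/(measurable_int mu ie).
have mhT := measurable_fun_g_sigma mh.
have ihp : mu.-integrable setT (EFin \o (h^\+ \* e)).
  apply: integrable_le_normr ihe.
    by apply: measurable_funM => //; exact: measurable_funrpos.
  by move=> x; rewrite !normrM ler_wpM2r //; exact: normr_max0_le.
have ihn : mu.-integrable setT (EFin \o (h^\- \* e)).
  apply: integrable_le_normr ihe.
    by apply: measurable_funM => //; exact: measurable_funrneg.
  by move=> x; rewrite !normrM ler_wpM2r // -[`|h x|]normrN; exact: normr_max0_le.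
transitivity (\int[mu]_x (h^\+ x * e x - h^\- x * e x)).
  by apply: eq_Rintegral => x _; rewrite -mulrBl -[in LHS](funrposBneg h).
by rewrite RintegralB // !ge0_Rintegral_mul_g_sigma_eq0 ?subrr //;
  [exact: measurable_funrneg | exact: measurable_funrpos].
Qed.

Lemma Rintegral_sqrD_g_sigma {e D : T -> R} :
  mu.-integrable setT (EFin \o e) ->
  (forall A, <<s G >> A -> \int[mu]_(x in A) e x = 0) ->
  measurable_fun [set: TG] (D : TG -> R) ->
  mu.-integrable setT (EFin \o (fun x => e x ^+ 2)) ->
  mu.-integrable setT (EFin \o (fun x => D x ^+ 2)) ->
  \int[mu]_x ((e x + D x) ^+ 2) = \int[mu]_x (e x ^+ 2) + \int[mu]_x (D x ^+ 2).
Proof.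
move=> ie e0 mD ie2 iD2.
have me : measurable_fun setT e by exact/measurable_EFinP/(measurable_int mu ie).
have mDT := measurable_fun_g_sigma mD.
have ie2D2 := integrableD_EFin mu ie2 iD2.
have iDe : mu.-integrable setT (EFin \o (D \* e)).
  apply: integrable_le_normr ie2D2; first exact: measurable_funM.
  move=> x /=; rewrite [X in _ <= X]ger0_norm ?addr_ge0 ?sqr_ge0 // mulrC.
  exact: normrM_le_sqrD.
have De0 := Rintegral_mul_g_sigma_eq0 ie e0 mD iDe.
transitivity (\int[mu]_x ((e x ^+ 2 + D x ^+ 2) + (D x * e x + D x * e x))).
  by apply: eq_Rintegral => x _; ring.
by rewrite RintegralD ?RintegralD ?De0 ?addr0 //; exact: integrableD_EFin.
Qed.

End sub_sigma_algebra.

Section cond_exp.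
Context {d} {T : measurableType d} {R : realType} (P : probability T R).
Context {G : set (set T)} {X Z : T -> R}.

Lemma cond_exp_g_sigma_measurable : is_cond_exp P <<s G >> X Z ->
  measurable_fun [set: g_sigma_algebraType G] (Z : g_sigma_algebraType G -> R).
Proof. by case=> mZ _; exact: preimage_measurable_fun_g_sigma. Qed.

Lemma cond_exp_measurable : G `<=` measurable -> is_cond_exp P <<s G >> X Z ->
  measurable_fun setT Z.
Proof. by move=> GM /cond_exp_g_sigma_measurable; exact: measurable_fun_g_sigma. Qed.

End cond_exp.

Section nested_conditioning.
Context {d} {T : measurableType d} {R : realType} {P : probability T R}.
Context {G G' : set (set T)}.
Hypotheses (GM : G `<=` measurable) (G'M : G' `<=` measurable).
Hypothesis GG' : <<s G >> `<=` <<s G' >>.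
Context {Y m m' v v' s : T -> R}.
Hypothesis mY : measurable_fun setT Y.
Hypothesis iY2 : P.-integrable setT (EFin \o (fun x => Y x ^+ 2)).
Hypotheses (hm : is_cond_exp P <<s G >> Y m) (hm' : is_cond_exp P <<s G' >> Y m').
Hypotheses (hv : is_cond_exp P <<s G >> (fun x => (Y x - m' x) ^+ 2) v)
  (hv' : is_cond_exp P <<s G' >> (fun x => (Y x - m' x) ^+ 2) v')
  (hs : is_cond_exp P <<s G >> (fun x => (Y x - m x) ^+ 2) s).

Let msT := cond_exp_measurable P GM hs.
Let mv'T := cond_exp_measurable P G'M hv'.

Lemma cond_var_ae_eq : s = v' %[ae P] -> v = v' %[ae P].
Proof.
have mvG := cond_exp_g_sigma_measurable P hv.
have msG := cond_exp_g_sigma_measurable P hs.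
case: hv hv' hs => _ [iv ev] [_ [_ ev']] [_ [si es]] sv'.
apply: (ae_eq_trans _ sv'); apply: (ae_eq_g_sigma_integral P GM) => //.
move=> A GA; have mA : measurable A by exact: g_sigma_sub_measurable GA.
rewrite ev // -ev'; last exact: GG'.
exact: (ae_eq_integral_EFin P mA mv'T msT (ae_eq_sym sv')).
Qed.

Lemma cond_mean_ae_eq : s = v' %[ae P] -> m = m' %[ae P].
Proof.
have mmT := cond_exp_measurable P GM hm.
have mm'T := cond_exp_measurable P G'M hm'.
have mm'G' := cond_exp_g_sigma_measurable P hm'.
case: hm hm' hv' hs => mm _ [_ [im' em']] [_ [iv' ev']] [_ [si es]] sv'.
have GT : <<s G >> setT := @measurableT _ (g_sigma_algebraType G).
have G'T : <<s G' >> setT := @measurableT _ (g_sigma_algebraType G').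
pose e x := Y x - m' x; pose f x := Y x - m x; pose D x := m' x - m x.
have iY := integrable_sqr_integrable P mY iY2.
have ie : P.-integrable setT (EFin \o e) := integrableB_EFin P iY im'.
have ie2 : P.-integrable setT (EFin \o (fun x => e x ^+ 2)).
  apply: (ge0_integrable_integral_eq P _ (fun x => sqr_ge0 (e x)) iv' (esym (ev' _ G'T))).
  exact/measurable_funX/measurable_funB.
have if2 : P.-integrable setT (EFin \o (fun x => f x ^+ 2)).
  apply: (ge0_integrable_integral_eq P _ (fun x => sqr_ge0 (f x)) si (esym (es _ GT))).
  exact/measurable_funX/measurable_funB.
have e0 A : <<s G' >> A -> \int[P]_(x in A) e x = 0.
  move=> GA; have mA : measurable A by exact: g_sigma_sub_measurable GA.
  rewrite RintegralB //; try exact: (integrableS measurableT mA (subsetT _)).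
  by rewrite /Rintegral em' // subrr.
have mDG' : measurable_fun [set: g_sigma_algebraType G'] (D : g_sigma_algebraType G' -> R).
  apply: measurable_funB => //; apply: preimage_measurable_fun_g_sigma => B mB.
  by apply: GG'; exact: mm.
have iD2 : P.-integrable setT (EFin \o (fun x => D x ^+ 2)).
  have iff := integrableD_EFin P if2 ie2.
  apply: (integrable_le_normr P _ _ (integrableD_EFin P iff iff)).
    exact/measurable_funX/measurable_funB.
  move=> x /=; rewrite !ger0_norm ?addr_ge0 ?sqr_ge0 //.
  by rewrite (_ : D x = f x - e x); [exact: sqrB_le | rewrite /D /f /e; ring].
have pyth := Rintegral_sqrD_g_sigma P G'M ie e0 mDG' ie2 iD2.
have f2e2 : \int[P]_x (f x ^+ 2) = \int[P]_x (e x ^+ 2).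
  by congr fine; rewrite -es // (ae_eq_integral_EFin P measurableT msT mv'T sv') ev'.
have D20 : \int[P]_x (D x ^+ 2) = 0.
  apply: (addrI (\int[P]_x (e x ^+ 2))); rewrite addr0 -pyth -f2e2.
  by apply: eq_Rintegral => x _; rewrite /D /f /e; congr (_ ^+ 2); ring.
apply: filterS (ge0_Rintegral_eq0 P (fun x => sqr_ge0 (D x)) iD2 D20) => x D0 _.
by move/eqP: (D0 I); rewrite sqrf_eq0 subr_eq0 => /eqP ->.
Qed.

End nested_conditioning.

Lemma past_gen_measurable {d} {T : measurableType d} {R : realType}
    (Y : nat -> T -> R) (t : nat) :
  (forall s, measurable_fun setT (Y s)) -> past_gen Y t `<=` measurable.
Proof. by move=> mY A [s [_ [B [mB ->]]]]; rewrite -(setTI (_ @^-1` _)); exact: mY. Qed.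

Section past_sigma2.
Context {d} {T : measurableType d} {R : realType}.
Variables (Y1 Y2 : nat -> T -> R) (t : nat).

Lemma past_sigma_setU_measurable : (forall s, measurable_fun setT (Y1 s)) ->
  (forall s, measurable_fun setT (Y2 s)) ->
  past_sigma Y1 t `|` past_sigma Y2 t `<=` measurable.
Proof.
move=> mY1 mY2 A [] YA; apply: g_sigma_sub_measurable YA; exact: past_gen_measurable.
Qed.

Lemma past_sigma_sub_past_sigma2 : past_sigma Y2 t `<=` past_sigma2 Y1 Y2 t.
Proof. by move=> A Y2A; apply: sub_sigma_algebra; right. Qed.

End past_sigma2.

Theorem proposition1 (R : realType) (d : measure_display)
  (T : measurableType d) (P : probability T R)
  (Y1 Y2 : nat -> T -> R)
  (mY1 : forall s, measurable_fun setT (Y1 s))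
  (mY2 : forall s, measurable_fun setT (Y2 s))
  (sqint : forall s, P.-integrable setT (fun x => ((Y2 s x) ^+ 2)%:E))
  (t : nat)
  (m2 m12 v2 v12 s2 : T -> R)
  (hm2 : is_cond_exp P (past_sigma Y2 t) (Y2 t) m2)
  (hm12 : is_cond_exp P (past_sigma2 Y1 Y2 t) (Y2 t) m12)
  (hv2 : is_cond_exp P (past_sigma Y2 t)
           (fun x => (Y2 t x - m12 x) ^+ 2) v2)
  (hv12 : is_cond_exp P (past_sigma2 Y1 Y2 t)
           (fun x => (Y2 t x - m12 x) ^+ 2) v12)
  (hs2 : is_cond_exp P (past_sigma Y2 t)
           (fun x => (Y2 t x - m2 x) ^+ 2) s2) :
  ((0 < P [set x | m2 x <> m12 x])%E \/
   (0 < P [set x | v2 x <> v12 x])%E) ->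
  (0 < P [set x | s2 x <> v12 x])%E.
Proof.
have G2M := past_gen_measurable Y2 t mY2.
have G12M := past_sigma_setU_measurable Y1 Y2 t mY1 mY2.
have G2G12 := past_sigma_sub_past_sigma2 Y1 Y2 t.
have mm2 := cond_exp_measurable P G2M hm2.
have mm12 := cond_exp_measurable P G12M hm12.
have mv2 := cond_exp_measurable P G2M hv2.
have mv12 := cond_exp_measurable P G12M hv12.
have ms2 := cond_exp_measurable P G2M hs2.
move=> MV; rewrite lt0e measure_ge0 andbT; apply/eqP.
move=> /(ae_eq_measure_neq0 P ms2 mv12) sv.
have /(ae_eq_measure_neq0 P mm2 mm12) M0 :=
  cond_mean_ae_eq G2M G12M G2G12 (mY2 t) (sqint t) hm2 hm12 hv12 hs2 sv.
have /(ae_eq_measure_neq0 P mv2 mv12) V0 := cond_var_ae_eq G2M G12M G2G12 hv2 hv12 hs2 sv.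
by case: MV; rewrite ?M0 ?V0 ltxx.
Qed.
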